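(* Let $L$ be a lattice. The following are equivalent: (1) $\exists$ has an $\omega$-strategy in the $(m,k)$-game on $L$ with starting position $(\{a\},\{b\})$ for all $a,b\in L$ with $a\not\leq b$ and for all $3\leq m,k\leq\omega$; (2) $\exists$ has a $5$-strategy in the $(3,3)$-game on $L$ with starting position $(\{a\},\{b\})$ for all $a,b\in L$ with $a\not\leq b$; (3) $L$ is distributive.
   Context: Work in ZFC. For a poset $P$, $2\leq\alpha,\beta\leq\omega$ and $U_0,V\subseteq P$, the $(\alpha,\beta)$-game with starting position $(U_0,V)$ is played between $\forall$ and $\exists$ in rounds $0,1,2,\ldots$; a set $U$ is maintained, initially $U_0$, with $V$ fixed. Each round $\forall$ moves and $\exists$ responds: (1) if $b\geq a$ for some $a\in U$, $\forall$ may play $(b)$ and $\exists$ must add $b$ to $U$; (2) if $A\subseteq U$ with $|A|<\alpha$ and $\bigwedge A$ exists in $P$, $\forall$ may play $A$ and $\exists$ must add $\bigwedge A$ to $U$; (3) if $B\subseteq P$ with $|B|<\beta$ and $\bigvee B$ exists in $P$ and lies in $U$, $\forall$ may play $B$ and $\exists$ must choose some $b\in B$ and add it to $U$. $\forall$ wins in round $n$ if $U\cap V\neq\emptyset$ at the beginning of round $n$. $\exists$ has an $n$-strategy if she can guarantee that $\forall$ does not win until at least round $n+1$, and an $\omega$-strategy if she can guarantee that $\forall$ never wins. *)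

From HB Require Import structures.
From Stdlib Require List.
From mathcomp Require Import all_boot all_order.
Set Implicit Arguments. Unset Strict Implicit. Unset Printing Implicit Defensive.
Import Order.Theory.
Local Open Scope order_scope.

(* Cardinal bounds 2 <= alpha <= omega: either a finite n or omega. *)
Inductive gcard := Fin of nat | Omega.

Definition card_lt (n : nat) (c : gcard) : Prop :=
  match c with Fin m => (n < m)%N | Omega => True end.
Definition card_ge (n : nat) (c : gcard) : Prop :=
  match c with Fin m => (n <= m)%N | Omega => True end.

Section Game.
Context {disp : Order.disp_t} {P : porderType disp}.

Definition is_glb (A : seq P) (x : P) : Prop :=
  (forall y, y \in A -> x <= y) /\
  (forall z, (forall y, y \in A -> z <= y) -> z <= x).

Definition is_lub (B : seq P) (x : P) : Prop :=
  (forall y, y \in B -> y <= x) /\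
  (forall z, (forall y, y \in B -> y <= z) -> x <= z).

(* Moves of player forall.  Sets played in moves (2),(3) have cardinality
   < alpha <= omega, hence are finite; they are given as sequences, whose
   underlying set is the set of their elements. *)
Inductive amove := MUp of P | MMeet of seq P | MJoin of seq P.

Definition legal (alpha beta : gcard) (U : P -> Prop) (mv : amove) : Prop :=
  match mv with
  | MUp b => exists2 a, U a & a <= b
  | MMeet A => (forall y, y \in A -> U y) /\ card_lt (size (undup A)) alpha /\
               exists x, is_glb A x
  | MJoin B => card_lt (size (undup B)) beta /\ exists2 x, is_lub B x & U x
  end.

Definition valid_resp (mv : amove) (c : P) : Prop :=
  match mv with
  | MUp b => c = b
  | MMeet A => is_glb A c
  | MJoin B => c \in B
  end.

(* history of completed rounds, most recent first *)
Definition history := seq (amove * P).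

Definition position (U0 : P -> Prop) (h : history) : P -> Prop :=
  fun y => U0 y \/ exists mv, List.In (mv, y) h.

Definition strategy := history -> amove -> P.

Inductive reachable (alpha beta : gcard) (U0 : P -> Prop) (s : strategy)
  : history -> Prop :=
| reach_nil : reachable alpha beta U0 s [::]
| reach_cons h mv : reachable alpha beta U0 s h ->
    legal alpha beta (position U0 h) mv ->
    reachable alpha beta U0 s ((mv, s h mv) :: h).

Definition disjointP (U V : P -> Prop) : Prop := forall x, U x -> V x -> False.

(* exists has an n-strategy in the (alpha,beta)-game from (U0,V): forall does
   not win in rounds 0..n, i.e. the position at the beginning of each of the
   rounds 0..n is disjoint from V, and exists answers legally in rounds
   0..n-1. *)
Definition n_strategy (n : nat) (alpha beta : gcard) (U0 V : P -> Prop) : Prop :=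
  exists s : strategy, forall h, reachable alpha beta U0 s h -> (size h <= n)%N ->
    disjointP (position U0 h) V /\
    ((size h < n)%N -> forall mv, legal alpha beta (position U0 h) mv ->
                       valid_resp mv (s h mv)).

Definition omega_strategy (alpha beta : gcard) (U0 V : P -> Prop) : Prop :=
  exists s : strategy, forall h, reachable alpha beta U0 s h ->
    disjointP (position U0 h) V /\
    (forall mv, legal alpha beta (position U0 h) mv -> valid_resp mv (s h mv)).

End Game.

Definition distributive_lattice (d : Order.disp_t) (L : latticeType d) : Prop :=
  forall x y z : L, x `&` (y `|` z) = (x `&` y) `|` (x `&` z).

From HB Require Import structures.
From mathcomp Require Import all_boot all_order.
From Stdlib Require Import ClassicalEpsilon Classical.
Set Implicit Arguments. Unset Strict Implicit.
Import Order.Theory.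
Local Open Scope order_scope.

(* If L is distributive and a is not below b, then exists plays so that b never
   enters the filter generated by the current position U.  Moves (1) and (2)
   add elements of that filter, so they are harmless.  For a join move \/B in U:
   if every c in B put b into the filter, there would be one finite meet w of
   elements of U with w /\ c <= b for all c in B, hence by distributivity
   w /\ \/B <= b, i.e. b was already in the filter.
   Conversely, if x /\ (y \/ z) is not below (x /\ y) \/ (x /\ z) =: b, then
   starting from a := x /\ (y \/ z) forall plays y \/ z, then {y, z}; whichever
   c exists picks, the meet a /\ c lies below b, so forall reaches b in round 4. *)

Section FiniteMeets.
Context {d : Order.disp_t} {L : latticeType d}.

Definition meetl (x : L) (l : seq L) : L := foldr Order.meet x l.

Lemma meetl_le_seed x l : meetl x l <= x.
Proof. by elim: l => [|y l IH] //=; apply: le_trans (leIr _ _) IH. Qed.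

Lemma meetl_le_mem x l y : y \in l -> meetl x l <= y.
Proof.
elim: l => [|z l IH] //=; rewrite inE => /orP [/eqP ->|/IH]; first exact: leIl.
exact: le_trans (leIr _ _).
Qed.

Lemma le_meetl x l w : w <= x -> {in l, forall y, w <= y} -> w <= meetl x l.
Proof.
move=> wx; elim: l => [|y l IH] //= wl.
by rewrite lexI wl ?mem_head // IH // => z zl; rewrite wl // inE zl orbT.
Qed.

Lemma meetl_subset x l l' : {subset l' <= l} -> meetl x l <= meetl x l'.
Proof.
by move=> sub; apply: le_meetl (meetl_le_seed _ _) _ => y /sub /meetl_le_mem.
Qed.

Lemma meetl_cat x l l' : meetl x (l ++ l') = meetl x l `&` meetl x l'.
Proof.
apply/le_anti/andP; split.
  by rewrite lexI !meetl_subset // => y yl; rewrite mem_cat yl ?orbT.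
apply: le_meetl; first exact: le_trans (leIl _ _) (meetl_le_seed _ _).
by move=> y; rewrite mem_cat => /orP [] /(meetl_le_mem x) yl;
  [apply: le_trans (leIl _ _) yl | apply: le_trans (leIr _ _) yl].
Qed.

Lemma le_joinl (c0 : L) B y : y \in c0 :: B -> y <= foldr Order.join c0 B.
Proof.
elim: B c0 => [|c B IH] c0 /=; first by rewrite inE => /eqP ->.
rewrite !inE => /orP [/eqP y0|/orP [/eqP ->|yB]].
- by apply: le_trans (leUr _ _); apply: IH; rewrite y0 mem_head.
- exact: leUl.
- by apply: le_trans (leUr _ _); apply: IH; rewrite inE yB orbT.
Qed.

Lemma meet_joinl_le (D : distributive_lattice L) (w b c0 : L) B :
  {in c0 :: B, forall c, w `&` c <= b} -> w `&` foldr Order.join c0 B <= b.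
Proof.
elim: B => [|c B IH] wB /=; first by rewrite wB ?mem_head.
rewrite D leUx wB ?inE ?eqxx ?orbT //= IH // => c'.
by rewrite inE => /orP [/eqP ->|c'B]; apply: wB; rewrite !inE ?eqxx ?c'B ?orbT.
Qed.

Lemma meet_lub_le (D : distributive_lattice L) (w b : L) B j :
  is_lub B j -> {in B, forall c, w `&` c <= b} -> w `&` j <= b.
Proof.
case: B => [|c0 B] [_ j_min] wB; first by apply: le_trans (leIr _ _) (j_min _ _).
have j_le : j <= foldr Order.join c0 B by apply: j_min => y /le_joinl.
exact: le_trans (leI2 (lexx w) j_le) (meet_joinl_le D wB).
Qed.

End FiniteMeets.

Section FilterExcludes.
Context {d : Order.disp_t} {L : latticeType d}.
Variables (a b : L).

(* b is not in the filter generated by a and U. *)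
Definition excludes (U : L -> Prop) : Prop :=
  forall l, {in l, forall y, U y} -> ~ meetl a l <= b.

Lemma excludes_sub (U V : L -> Prop) :
  (forall y, V y -> U y) -> excludes U -> excludes V.
Proof. by move=> VU exU l lV; apply: exU => y /lV /VU. Qed.

Lemma meetl_split (U : L -> Prop) c l : {in l, forall y, U y \/ y = c} ->
  exists2 l', {in l', forall y, U y} & meetl a l' `&` c <= meetl a l.
Proof.
elim: l => [|y l IH] lUc; first by exists [::] => //; exact: leIl.
have [|l' l'U l'le] := IH; first by move=> z zl; apply: lUc; rewrite inE zl orbT.
case: (lUc y (mem_head _ _)) => [Uy|->].
  exists (y :: l'); first by move=> z; rewrite inE => /orP [/eqP ->|/l'U].
  rewrite /= lexI (le_trans (leIl _ _) (leIl _ _)) /=.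
  exact: le_trans (leI2 (leIr _ _) (lexx _)) l'le.
by exists l' => //=; rewrite lexI leIr l'le.
Qed.

Lemma excludes_add (U : L -> Prop) A c : excludes U -> {in A, forall y, U y} ->
  meetl a A <= c -> excludes (fun y => U y \/ y = c).
Proof.
move=> exU AU Ac l lUc lb; have [l' l'U l'le] := meetl_split lUc.
apply: (exU (l' ++ A)); first by move=> y; rewrite mem_cat => /orP [/l'U|/AU].
apply: le_trans lb; apply: le_trans l'le.
by rewrite meetl_cat; apply: leI2 (lexx _) Ac.
Qed.

Lemma not_excludes_add (U : L -> Prop) c : ~ excludes (fun y => U y \/ y = c) ->
  exists2 l, {in l, forall y, U y} & meetl a l `&` c <= b.
Proof.
move=> nex; apply: NNPP => nw; apply: nex => l lUc lb.
have [l' l'U l'le] := meetl_split lUc.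
by apply: nw; exists l' => //; apply: le_trans lb.
Qed.

Lemma common_witness (U : L -> Prop) (B : seq L) :
  {in B, forall c, exists2 l, {in l, forall y, U y} & meetl a l `&` c <= b} ->
  exists2 l, {in l, forall y, U y} & {in B, forall c, meetl a l `&` c <= b}.
Proof.
elim: B => [|c B IH] wB; first by exists [::].
have [l lU lc] := wB c (mem_head _ _).
have [|l0 l0U l0B] := IH; first by move=> c' c'B; apply: wB; rewrite inE c'B orbT.
exists (l ++ l0); first by move=> y; rewrite mem_cat => /orP [/lU|/l0U].
move=> c'; rewrite meetl_cat inE => /orP [/eqP ->|c'B].
  exact: le_trans (leI2 (leIl _ _) (lexx _)) lc.
exact: le_trans (leI2 (leIr _ _) (lexx _)) (l0B _ c'B).
Qed.

Lemma excludes_join (D : distributive_lattice L) (U : L -> Prop) B j :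
  excludes U -> U j -> is_lub B j ->
  exists2 c, c \in B & excludes (fun y => U y \/ y = c).
Proof.
move=> exU Uj jB; apply: NNPP => none.
have [|l lU lB] := common_witness (U := U) (B := B).
  by move=> c cB; apply: not_excludes_add => exc; apply: none; exists c.
apply: (exU (j :: l)); first by move=> y; rewrite inE => /orP [/eqP ->|/lU].
by apply: le_trans (meet_lub_le D jB lB); rewrite /= lexI leIl leIr.
Qed.

End FilterExcludes.

Section GameBasics.
Context {d : Order.disp_t} {P : porderType d}.

Lemma position_cons (U0 : P -> Prop) h mv c y :
  position U0 ((mv, c) :: h) y <-> position U0 h y \/ y = c.
Proof.
rewrite /position /=; split.
- case=> [U0y|[mv' [[_ ->]|hy]]]; [by left; left | by right | by left; right; exists mv'].
- by case=> [[U0y|[mv' hy]]|->]; [left | right; exists mv'; right | right; exists mv; left].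
Qed.

Lemma position_head (U0 : P -> Prop) h mv c : position U0 ((mv, c) :: h) c.
Proof. by apply/position_cons; right. Qed.

Lemma omega_n_strategy n alpha beta (U0 V : P -> Prop) :
  omega_strategy alpha beta U0 V -> n_strategy n alpha beta U0 V.
Proof. by case=> s win; exists s => h hR _; have [? ?] := win h hR. Qed.

Lemma n_strategy_leq m n alpha beta (U0 V : P -> Prop) : (m <= n)%N ->
  n_strategy n alpha beta U0 V -> n_strategy m alpha beta U0 V.
Proof.
move=> mn [s win]; exists s => h hR hm; have [? resp] := win h hR (leq_trans hm mn).
by split=> // hlt; apply: resp (leq_trans hlt mn).
Qed.

End GameBasics.

Section DistributiveStrategy.
Context {d : Order.disp_t} {L : latticeType d}.
Variables (a b : L).

Let U0 : L -> Prop := fun y => y = a.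

(* On legal moves the epsilon choices are not junk: by [excludes_join] for joins. *)
Definition filter_strategy : strategy := fun h mv =>
  match mv with
  | MUp c => c
  | MMeet A => epsilon (inhabits a) (is_glb A)
  | MJoin B => epsilon (inhabits a)
      (fun c => c \in B /\ excludes a b (fun y => position U0 h y \/ y = c))
  end.

Hypotheses (D : distributive_lattice L) (nab : ~~ (a <= b)).

Lemma filter_strategy_join m k h B :
  excludes a b (position U0 h) -> legal m k (position U0 h) (MJoin B) ->
  filter_strategy h (MJoin B) \in B /\
  excludes a b (fun y => position U0 h y \/ y = filter_strategy h (MJoin B)).
Proof.
move=> exh [_ [j jB hj]]; have [c cB exc] := excludes_join D exh hj jB.
exact: (epsilon_spec (inhabits a)
  (fun c => c \in B /\ excludes a b (fun y => position U0 h y \/ y = c))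
  (ex_intro _ c (conj cB exc))).
Qed.

Lemma filter_strategy_excludes m k h :
  reachable m k U0 filter_strategy h -> excludes a b (position U0 h).
Proof.
elim=> [|{}h mv _ exh lg].
  move=> l la lb; apply: (negP nab); apply: le_trans _ lb; apply: le_meetl => // y.
  by move/la => [-> | [? []]].
apply: excludes_sub (fun y => proj1 (position_cons _ _ _ _ _)) _.
case: mv lg => [c|A|B] /=.
- case=> u hu uc; apply: (excludes_add (A := [:: u])) exh _ _.
    by move=> y; rewrite inE => /eqP ->.
  exact: le_trans (meetl_le_mem _ (mem_head _ _)) uc.
- case=> Ah [_ [x glb_x]]; apply: (excludes_add (A := A)) exh Ah _.
  have glb : is_glb A (epsilon (inhabits a) (is_glb A)) by apply: epsilon_spec; exists x.
  by apply: glb.2 => y /meetl_le_mem.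
- by move=> lg; have [] := filter_strategy_join exh lg.
Qed.

Lemma filter_strategy_omega m k : omega_strategy m k U0 (fun y => y = b).
Proof.
exists filter_strategy => h hR; have exh := filter_strategy_excludes hR; split.
  move=> x hx xb; rewrite xb in hx; apply: (exh [:: b]).
    by move=> y; rewrite inE => /eqP ->.
  exact: meetl_le_mem (mem_head _ _).
case=> [c|A|B] //= lg; last by have [] := filter_strategy_join exh lg.
by case: lg => _ [_ [x glb_x]]; apply: epsilon_spec; exists x.
Qed.

End DistributiveStrategy.

Section NonDistributivePlay.
Context {d : Order.disp_t} {L : latticeType d}.

Lemma is_lub_pair (y z : L) : is_lub [:: y; z] (y `|` z).
Proof.
split=> [w|w wB]; first by rewrite !inE => /orP [] /eqP ->; [exact: leUl | exact: leUr].
by rewrite leUx !wB ?inE ?eqxx ?orbT.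
Qed.

Lemma is_glb_pair (y z : L) : is_glb [:: y; z] (y `&` z).
Proof.
split=> [w|w wB]; first by rewrite !inE => /orP [] /eqP ->; [exact: leIl | exact: leIr].
by rewrite lexI !wB ?inE ?eqxx ?orbT.
Qed.

Lemma forall_wins_in_round4 (a b y z : L) :
  a <= y `|` z -> a `&` y <= b -> a `&` z <= b ->
  ~ n_strategy 4 (Fin 3) (Fin 3) (fun u => u = a) (fun u => u = b).
Proof.
move=> ayz ayb azb [s win].
set U0 := fun u : L => u = a.
have play h mv : reachable (Fin 3) (Fin 3) U0 s h -> (size h < 4)%N ->
    legal (Fin 3) (Fin 3) (position U0 h) mv ->
    reachable (Fin 3) (Fin 3) U0 s ((mv, s h mv) :: h) /\ valid_resp mv (s h mv).
  move=> hR hsz lg; split; first exact: reach_cons.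
  by apply: (win h hR (ltnW hsz)).2.
have pair_small (u v : L) : (size (undup [:: u; v]) < 3)%N.
  exact: leq_ltn_trans (size_undup _) _.
have [R1 /= up_yz] := play [::] (MUp (y `|` z)) (reach_nil _ _ _ _) isT
  (ex_intro2 _ _ a (or_introl erefl) ayz).
rewrite up_yz in R1.
set h1 := [:: _] in R1.
have [R2 /= c_yz] := play h1 (MJoin [:: y; z]) R1 isT
  (conj (pair_small y z) (ex_intro2 _ _ _ (is_lub_pair y z) (position_head _ _ _ _))).
set c := s h1 _ in R2 c_yz; set h2 := _ :: h1 in R2.
have meet_legal : legal (Fin 3) (Fin 3) (position U0 h2) (MMeet [:: a; c]).
  split; last by split; [exact: pair_small | exists (a `&` c); exact: is_glb_pair].
  by move=> u; rewrite !inE => /orP [] /eqP ->; [left | exact: position_head].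
have [R3 [glb_low _]] := play h2 _ R2 isT meet_legal.
set e := s h2 _ in R3 glb_low; set h3 := _ :: h2 in R3.
have eb : e <= b.
  have eac : e <= a `&` c by rewrite lexI !glb_low ?inE ?eqxx ?orbT.
  by move: c_yz; rewrite !inE => /orP [] /eqP cE; rewrite cE in eac;
    [exact: le_trans eac ayb | exact: le_trans eac azb].
have [R4 /= reach_b] := play h3 (MUp b) R3 isT (ex_intro2 _ _ e (position_head _ _ _ _) eb).
exact: (win _ R4 isT).1 _ (position_head _ _ _ _) reach_b.
Qed.

Lemma distributive_from_4_strategies :
  (forall a b : L, ~~ (a <= b) ->
     n_strategy 4 (Fin 3) (Fin 3) (fun u => u = a) (fun u => u = b)) ->
  distributive_lattice L.
Proof.
move=> strat x y z; apply/le_anti/andP; split; last first.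
  rewrite leUx !lexI !leIl (le_trans (leIr _ _) (leUl _ _)).
  by rewrite (le_trans (leIr _ _) (leUr _ _)).
apply/negPn/negP => nle; apply: (forall_wins_in_round4 (y := y) (z := z) _ _ _ (strat _ _ nle)).
- exact: leIr.
- by apply: le_trans (leUl _ _); apply: leI2 (leIl _ _) (lexx _).
- by apply: le_trans (leUr _ _); apply: leI2 (leIl _ _) (lexx _).
Qed.

End NonDistributivePlay.

Theorem corollary6p3 (d : Order.disp_t) (L : latticeType d) :
  [<-> (forall a b : L, ~~ (a <= b) -> forall m k : gcard, card_ge 3 m -> card_ge 3 k ->
          omega_strategy m k (fun y => y = a) (fun y => y = b));
       (forall a b : L, ~~ (a <= b) ->
          n_strategy 5 (Fin 3) (Fin 3) (fun y => y = a) (fun y => y = b));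
       distributive_lattice L].
Proof.
tfae.
- by move=> omega a b nab; apply: omega_n_strategy (omega a b nab (Fin 3) (Fin 3) isT isT).
- move=> five; apply: distributive_from_4_strategies => a b nab.
  exact: n_strategy_leq (five a b nab).
- by move=> D a b nab m k _ _; apply: filter_strategy_omega.
Qed.
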